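(* Let $X=\{X_t\}_{t\ge0}$ be a continuous-time random walk on $\mathbb{Z}^d$ started at the origin, and let $\bm{p}_t(w)=\mathrm{P}\{X_t=w\}$ for $t\ge0$, $w\in\mathbb{Z}^d$. Then for all $t,s\ge0$ and $x,z\in\mathbb{Z}^d$, \[\sum_{y\in\mathbb{Z}^d}[\bm{p}_t(x-y)\bm{p}_s(y-z)]^2\le[\bm{p}_{t+s}(x-z)]^2.\] *)

From HB Require Import structures.
From mathcomp Require Import all_boot all_order all_algebra.
From mathcomp Require Import all_classical all_reals all_analysis.
Set Implicit Arguments. Unset Strict Implicit. Unset Printing Implicit Defensive.
Import Order.TTheory GRing.Theory Num.Theory.
Local Open Scope classical_set_scope.
Local Open Scope ring_scope.
Local Open Scope ereal_scope.

Definition is_jump_distr (R : realType) (d : nat) (mu : 'rV[int]_d -> R) : Prop :=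
  (forall w, (0 <= mu w)%R) /\ \esum_(y in [set: 'rV[int]_d]) (mu y)%:E = 1.

(* n-fold convolution power of mu: law of the position after n jumps
   of the discrete-time walk started at the origin. *)
Fixpoint conv_pow (R : realType) (d : nat) (mu : 'rV[int]_d -> R) (n : nat)
    (w : 'rV[int]_d) : \bar R :=
  match n with
  | 0%N => ((w == 0)%:R)%:E
  | m.+1 => \esum_(y in [set: 'rV[int]_d]) (conv_pow mu m (w - y)%R * (mu y)%:E)
  end.

(* Transition function p_t(w) = P{X_t = w} of the continuous-time random walk
   on Z^d started at 0, with jump rate lam > 0 and jump distribution mu:
   X_t = S_{N_t}, N a Poisson process of rate lam independent of the
   discrete walk S with increments mu. *)
Definition ctrw_p (R : realType) (d : nat) (lam : R) (mu : 'rV[int]_d -> R)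
    (t : R) (w : 'rV[int]_d) : R :=
  fine (\esum_(n in [set: nat])
          ((expR (- (lam * t)) * (lam * t) ^+ n / (n`!)%:R)%R%:E * conv_pow mu n w)).

(* The transition function satisfies the Chapman-Kolmogorov equation
   p_{t+s}(x - z) = sum_y p_t(x - y) p_s(y - z): the convolution powers of the
   jump law add up, and the Poisson weights of parameters lam t and lam s
   convolve, by the binomial theorem, into the Poisson weights of parameter
   lam (t + s).  Every summand of a nonnegative sum is bounded by the whole sum
   S, so the sum of the squared summands is at most S * S. *)
From HB Require Import structures.
From mathcomp Require Import all_boot all_order all_algebra.
From mathcomp Require Import all_classical all_reals all_analysis.
From mathcomp Require Import ring zify.
Import Order.TTheory GRing.Theory Num.Theory.
Local Open Scope classical_set_scope.
Local Open Scope ring_scope.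

Section esum_facts.
Local Open Scope ereal_scope.
Context {R : realType}.

Lemma esumZl (T : choiceType) (I : set T) (a : T -> \bar R) (x : \bar R) :
  x \is a fin_num -> 0 <= x -> (forall i, 0 <= a i) ->
  \esum_(i in I) (x * a i) = x * \esum_(i in I) a i.
Proof.
move=> /fineK <-; set r := fine x; rewrite lee_fin => r0 a0.
rewrite /esum -ereal_supZl //; last first.
  by apply/set0P; exists (\sum_(i \in set0) a i); exists set0 => //; exact: fsets_set0.
congr ereal_sup; apply/seteqP; split => y /=.
  by move=> [A IA <-]; exists (\sum_(i \in A) a i); [exists A|rewrite ge0_mule_fsumr].
by move=> [_ [A IA <-] <-]; exists A => //; rewrite ge0_mule_fsumr.
Qed.

Lemma exchange_esum (T1 T2 : choiceType) (a : T1 -> T2 -> \bar R) :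
  (forall i j, 0 <= a i j) ->
  \esum_(i in [set: T1]) \esum_(j in [set: T2]) a i j =
  \esum_(j in [set: T2]) \esum_(i in [set: T1]) a i j.
Proof.
move=> a0; rewrite !esum_esum //.
rewrite (reindex_esum ([set: T2] `*`` (fun=> [set: T1])) _ (fun p => (p.2, p.1))) //.
split=> //= [[i1 i2] [j1 j2] _ _ [-> ->] //|[i1 i2] _].
by exists (i2, i1).
Qed.

Lemma esum_single_support (T : choiceType) (a : T -> \bar R) (j : T) :
  (forall i, i != j -> a i = 0) -> 0 <= a j ->
  \esum_(i in [set: T]) a i = a j.
Proof.
move=> aj a0; rewrite (esumID [set j]); last first.
  by move=> i _; have [->//|/aj ->] := eqVneq i j.
by rewrite setTI esum_set1 // esum1 ?adde0 // => i [_ /eqP /aj].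
Qed.

Lemma esum_nat2_antidiagonal (f : nat -> nat -> \bar R) :
  (forall m n, 0 <= f m n) ->
  \esum_(m in [set: nat]) \esum_(n in [set: nat]) f m n =
  \esum_(k in [set: nat]) \sum_(i < k.+1) f i (k - i)%N.
Proof.
move=> f0.
transitivity (\esum_(k in [set: nat]) \esum_(i in `I_k.+1) f i (k - i)%N).
  rewrite !esum_esum //.
  rewrite (reindex_esum ([set: nat] `*`` (fun k => `I_k.+1))
    ([set: nat] `*`` (fun=> [set: nat])) (fun p => (p.2, p.1 - p.2)%N)) //.
  split=> //= [[k1 i1] [k2 i2]|[m n] _].
    by rewrite !inE /= => -[_ /= h1] [_ /= h2] [e1 e2]; congr pair; lia.
  exists (m + n, m)%N; last by rewrite /= addKn.
  by split => //; rewrite /= ltnS leq_addr.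
by apply: eq_esum => k _; rewrite esum_fset ?finite_II // -fsbig_ord.
Qed.

Lemma esum_sqr_le (T : choiceType) (I : set T) (a : T -> R) (S : R) :
  (forall i, (0 <= a i)%R) -> \esum_(i in I) (a i)%:E = S%:E ->
  \esum_(i in I) (a i ^+ 2)%:E <= (S ^+ 2)%:E.
Proof.
move=> a0 sumS.
have a_leS i : I i -> (a i <= S)%R.
  rewrite -lee_fin -sumS => Ii; apply: esum_ge; exists [set i].
    by split; [exact: finite_set1|move=> _ ->].
  by rewrite fsbig_set1.
have S0 : (0 <= S)%R by rewrite -lee_fin -sumS esum_ge0 // => i _; rewrite lee_fin.
apply: (@le_trans _ _ (\esum_(i in I) (S%:E * (a i)%:E))).
  by apply: le_esum => i Ii; rewrite -EFinM lee_fin expr2 ler_wpM2r ?a_leS.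
by rewrite esumZl ?lee_fin // sumS -EFinM expr2.
Qed.

End esum_facts.

Section poisson_weight.
Context {R : realType}.

Definition poisson_weight (a : R) (n : nat) : R := expR (- a) * a ^+ n / (n`!)%:R.

Lemma poisson_weight_ge0 a n : 0 <= a -> 0 <= poisson_weight a n.
Proof. by move=> a0; rewrite divr_ge0 // mulr_ge0 ?expR_ge0 ?exprn_ge0. Qed.

Lemma esum_poisson_weight a :
  0 <= a -> (\esum_(n in [set: nat]) (poisson_weight a n)%:E = 1)%E.
Proof.
move=> a0; have coeff0 n : (0 <= (exp_coeff a n)%:E)%E by rewrite lee_fin exp_coeff_ge0.
transitivity (\esum_(n in [set: nat]) ((expR (- a))%:E * (exp_coeff a n)%:E))%E.
  by apply: eq_esum => n _; rewrite /poisson_weight /exp_coeff -EFinM mulrA.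
rewrite esumZl ?lee_fin ?expR_ge0 // -nneseries_esumT //.
transitivity ((expR (- a))%:E * limn (EFin \o series (exp_coeff a)))%E.
  by congr (_ * _)%E; apply/congr_lim/funext => n /=; rewrite /series /= sumEFin.
rewrite EFin_lim; last exact: is_cvg_series_exp_coeff.
by rewrite -[limn _]/(expR a) -EFinM mulrC expRxMexpNx_1.
Qed.

Lemma poisson_weightD a b k :
  \sum_(i < k.+1) poisson_weight a i * poisson_weight b (k - i) =
  poisson_weight (a + b) k.
Proof.
rewrite /poisson_weight opprD expRD (addrC a b) exprDn mulr_sumr mulr_suml.
apply: eq_bigr => i _; have ik : (i <= k)%N by rewrite -ltnS.
rewrite -(bin_fact ik) !natrM -mulr_natr.
have binC0 : ('C(k, i))%:R != 0 :> R by rewrite pnatr_eq0 -lt0n bin_gt0.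
have fact0 m : (m`!)%:R != 0 :> R by rewrite pnatr_eq0 -lt0n fact_gt0.
by field; rewrite binC0 !fact0.
Qed.

End poisson_weight.

Section conv_pow.
Local Open Scope ereal_scope.
Context {R : realType} {d : nat} (mu : 'rV[int]_d -> R).
Hypothesis hmu : is_jump_distr mu.

Let mu_ge0 u : 0 <= (mu u)%:E.
Proof. by rewrite lee_fin; case: hmu. Qed.

Lemma conv_pow_ge0 n w : 0 <= conv_pow mu n w.
Proof.
elim: n w => [|n IH] w /=; first by rewrite lee_fin ler0n.
by apply: esum_ge0 => y _; rewrite mule_ge0.
Qed.

Lemma conv_pow_le1 n w : conv_pow mu n w <= 1.
Proof.
elim: n w => [|n IH] w /=; first by rewrite lee_fin; case: (w == 0%R).
case: hmu => _ <-; apply: le_esum => y _.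
by rewrite -[X in _ <= X]mul1e lee_wpmul2r.
Qed.

Lemma conv_pow_fin_num n w : conv_pow mu n w \is a fin_num.
Proof.
by rewrite ge0_fin_numE ?conv_pow_ge0 // (le_lt_trans (conv_pow_le1 n w)) ?ltry.
Qed.

Lemma conv_powD m n x z :
  \esum_(y in [set: 'rV[int]_d]) (conv_pow mu m (x - y)%R * conv_pow mu n (y - z)%R)
  = conv_pow mu (m + n) (x - z)%R.
Proof.
elim: n z => [|n IH] z.
  rewrite addn0 (@esum_single_support _ _ _ z) /= ?subrr ?eqxx ?mule1 ?conv_pow_ge0 //.
  by move=> y yz; rewrite subr_eq0 (negbTE yz) mule0.
rewrite addnS /=.
transitivity (\esum_(y in [set: 'rV[int]_d]) \esum_(u in [set: 'rV[int]_d])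
    (conv_pow mu m (x - y)%R * (conv_pow mu n (y - z - u)%R * (mu u)%:E))).
  apply: eq_esum => y _; rewrite esumZl ?conv_pow_fin_num ?conv_pow_ge0 //.
  by move=> u; rewrite mule_ge0 ?conv_pow_ge0.
rewrite exchange_esum; last by move=> y u; rewrite !mule_ge0 ?conv_pow_ge0.
apply: eq_esum => u _.
rewrite -addrA -opprD muleC -IH -esumZl // => [|y]; last by rewrite mule_ge0 ?conv_pow_ge0.
by apply: eq_esum => y _; rewrite opprD addrA (muleC (mu u)%:E) muleA.
Qed.

End conv_pow.

Section poissonized_law.
Local Open Scope ereal_scope.
Context {R : realType} {d : nat} (mu : 'rV[int]_d -> R).
Hypothesis hmu : is_jump_distr mu.

(* The law at time [a] of the walk jumping at the times of a rate-one Poisson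
   process; [ctrw_p lam mu t] is its value at time [lam * t]. *)
Definition poissonized_law (a : R) (w : 'rV[int]_d) : \bar R :=
  \esum_(n in [set: nat]) ((poisson_weight a n)%:E * conv_pow mu n w).

Lemma poissonized_law_ge0 a w : (0 <= a)%R -> 0 <= poissonized_law a w.
Proof.
move=> a0; apply: esum_ge0 => n _.
by rewrite mule_ge0 ?conv_pow_ge0 // lee_fin poisson_weight_ge0.
Qed.

Lemma poissonized_law_fin_num a w : (0 <= a)%R -> poissonized_law a w \is a fin_num.
Proof.
move=> a0; rewrite ge0_fin_numE ?poissonized_law_ge0 //.
apply: (@le_lt_trans _ _ 1); last exact: ltry.
rewrite -(esum_poisson_weight _ a0); apply: le_esum => n _.
rewrite -[X in _ <= X]mule1 lee_wpmul2l ?conv_pow_le1 //.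
by rewrite lee_fin poisson_weight_ge0.
Qed.

Lemma poissonized_lawD a b x z : (0 <= a)%R -> (0 <= b)%R ->
  \esum_(y in [set: 'rV[int]_d])
     (poissonized_law a (x - y)%R * poissonized_law b (y - z)%R)
  = poissonized_law (a + b) (x - z)%R.
Proof.
move=> a0 b0.
have term_ge0 c m w : (0 <= c)%R -> 0 <= (poisson_weight c m)%:E * conv_pow mu m w.
  by move=> c0; rewrite mule_ge0 ?conv_pow_ge0 // lee_fin poisson_weight_ge0.
transitivity (\esum_(y in [set: 'rV[int]_d]) \esum_(m in [set: nat])
    \esum_(n in [set: nat])
    ((poisson_weight a m)%:E * conv_pow mu m (x - y)%R *
     ((poisson_weight b n)%:E * conv_pow mu n (y - z)%R))).
  apply: eq_esum => y _.
  rewrite muleC -esumZl ?poissonized_law_fin_num ?poissonized_law_ge0 //; last first.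
    by move=> m; rewrite term_ge0.
  apply: eq_esum => m _.
  rewrite muleC -esumZl ?fin_numM ?conv_pow_fin_num ?term_ge0 // => n.
  by rewrite term_ge0.
rewrite exchange_esum; last by move=> y m; apply: esum_ge0 => n _; rewrite mule_ge0 ?term_ge0.
transitivity (\esum_(m in [set: nat]) \esum_(n in [set: nat])
    ((poisson_weight a m * poisson_weight b n)%:E * conv_pow mu (m + n) (x - z)%R)).
  apply: eq_esum => m _; rewrite exchange_esum; last by move=> *; rewrite mule_ge0 ?term_ge0.
  apply: eq_esum => n _.
  rewrite -conv_powD // -esumZl //.
  - by apply: eq_esum => y _; rewrite EFinM muleACA.
  - by rewrite lee_fin mulr_ge0 ?poisson_weight_ge0.
  - by move=> y; rewrite mule_ge0 ?conv_pow_ge0.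
rewrite esum_nat2_antidiagonal; last first.
  by move=> m n; rewrite mule_ge0 ?conv_pow_ge0 // lee_fin mulr_ge0 ?poisson_weight_ge0.
apply: eq_esum => k _.
transitivity (\sum_(i < k.+1)
    ((poisson_weight a i * poisson_weight b (k - i))%:E * conv_pow mu k (x - z)%R)).
  by apply: eq_bigr => i _; rewrite subnKC // -ltnS.
rewrite -ge0_sume_distrl; last by move=> i _; rewrite lee_fin mulr_ge0 ?poisson_weight_ge0.
by rewrite sumEFin poisson_weightD.
Qed.

End poissonized_law.

Section ctrw.
Context {R : realType} {d : nat} (lam : R) (mu : 'rV[int]_d -> R).
Hypotheses (lam0 : 0 <= lam) (hmu : is_jump_distr mu).

Lemma ctrw_pE t w : ctrw_p lam mu t w = fine (poissonized_law mu (lam * t) w).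
Proof. by []. Qed.

Lemma ctrw_p_ge0 t w : 0 <= t -> 0 <= ctrw_p lam mu t w.
Proof. by move=> t0; rewrite fine_ge0 // poissonized_law_ge0 // mulr_ge0. Qed.

Lemma ctrw_p_chapman_kolmogorov t s x z : 0 <= t -> 0 <= s ->
  (\esum_(y in [set: 'rV[int]_d]) (ctrw_p lam mu t (x - y) * ctrw_p lam mu s (y - z))%:E
   = (ctrw_p lam mu (t + s) (x - z))%:E)%E.
Proof.
move=> t0 s0; have [lt0 ls0] : 0 <= lam * t /\ 0 <= lam * s by rewrite !mulr_ge0.
rewrite !ctrw_pE mulrDr fineK ?poissonized_law_fin_num ?addr_ge0 //.
rewrite -poissonized_lawD //; apply: eq_esum => y _.
by rewrite EFinM !fineK ?poissonized_law_fin_num.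
Qed.

End ctrw.

Theorem lemma3p3 (R : realType) (d : nat) (lam : R) (mu : 'rV[int]_d -> R)
  (hlam : 0 < lam) (hmu : is_jump_distr mu)
  (t s : R) (ht : 0 <= t) (hs : 0 <= s) (x z : 'rV[int]_d) :
  (\esum_(y in [set: 'rV[int]_d])
      ((ctrw_p lam mu t (x - y) * ctrw_p lam mu s (y - z)) ^+ 2)%:E
   <= ((ctrw_p lam mu (t + s) (x - z)) ^+ 2)%:E)%E.
Proof.
have lam0 := ltW hlam.
apply: esum_sqr_le; last exact: ctrw_p_chapman_kolmogorov.
by move=> y; rewrite mulr_ge0 ?ctrw_p_ge0.
Qed.
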